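(* Let $Q$ be a complete quiver with at least one frozen vertex, and let $\mathbf M=m_1m_2\cdots$ be an infinite mutation sequence which is reduced, weakly balanced and cycle-preserving, and such that $m_1$ is not the apex of a vortex in $Q$. Then $Q$ is eventually sign-coherent on $\mathbf M$: there is $T$ such that $Q^{(j)}_{\mathbf M}$ is sign-coherent for all $j>T$.
   Context: A quiver is a finite directed multigraph with no loops and no oriented 2-cycles, whose vertex set is partitioned into mutable and frozen vertices; arrows between two frozen vertices are ignored. $Q|_S$ is the induced subquiver on $S$. Mutation $\mu_j$ at mutable $j$: for each path $i\to j\to k$ with $a$ arrows $i\to j$ and $b$ arrows $j\to k$ add $ab$ arrows $i\to k$, reverse all arrows at $j$, cancel 2-cycles. A mutation sequence $\mathbf M=m_1m_2\cdots$ is a sequence of mutable vertices; $Q^{(0)}_{\mathbf M}=Q$, $Q^{(i)}_{\mathbf M}=\mu_{m_i}(Q^{(i-1)}_{\mathbf M})$. It is reduced if $m_i\neq m_{i+1}$ for all $i$, and weakly balanced if every mutable vertex occurs infinitely often. Complete: at least one arrow between every pair of vertices at least one of which is mutable. A 3-vertex (sub)quiver is an oriented 3-cycle if it has at most one frozen vertex and its underlying directed graph is not acyclic. A mutable vertex $j$ is cycle-preserving for $Q$ if whenever $Q|_{\{i,j,k\}}$ is an oriented 3-cycle containing $j$, so is $\mu_j(Q)|_{\{i,j,k\}}$; $\mathbf M$ is cycle-preserving if $m_\ell$ is cycle-preserving for $Q^{(\ell-1)}_{\mathbf M}$ for every $\ell\ge1$. A vortex is a quiver on four vertices, at least three mutable,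 in which one vertex (the apex) is a source or sink and the other three support an oriented cycle; $j$ is the apex of a vortex in $Q$ if it is the apex of some 4-vertex induced subquiver that is a vortex. A mutable vertex adjacent to at least one frozen vertex is red (resp. green) if all arrows between it and frozen vertices point towards (resp. away from) it; a quiver is sign-coherent if every mutable vertex is red or green. *)

From mathcomp Require Import all_boot all_order all_algebra.
Set Implicit Arguments. Unset Strict Implicit. Unset Printing Implicit Defensive.
Import Order.TTheory GRing.Theory Num.Theory.
Local Open Scope ring_scope.

(* A quiver on vertex set 'I_n is encoded by its exchange data:
   b i j = (#arrows i -> j) - (#arrows j -> i).  Since quivers have no
   oriented 2-cycles, the arrows between i and j are recovered from b.
   The set of mutable vertices is [mut]; its complement is the frozen set.
   Arrows between two frozen vertices are ignored by every predicate below. *)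
Definition qmat (n : nat) := 'I_n -> 'I_n -> int.

Definition is_quiver n (b : qmat n) : Prop := forall i j, b i j = - b j i.

Definition arr n (mut : {set 'I_n}) (b : qmat n) (i j : 'I_n) : bool :=
  ((i \in mut) || (j \in mut)) && (0 < b i j).

(* Mutation at j: for paths i -> j -> k with a, b arrows add a*b arrows
   i -> k; reverse arrows at j; cancel 2-cycles (automatic in the net count). *)
Definition mutate n (b : qmat n) (j : 'I_n) : qmat n :=
  fun i k =>
    if (i == j) || (k == j) then - b i k
    else b i k + Num.max 0 (b i j) * Num.max 0 (b j k)
               - Num.max 0 (b k j) * Num.max 0 (b j i).

(* Q^(i)_M, with m_{l+1} = M l. *)
Fixpoint qseq n (b : qmat n) (M : nat -> 'I_n) (l : nat) : qmat n :=
  match l with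
  | 0 => b
  | l'.+1 => mutate (qseq b M l') (M l')
  end.

Definition complete n (mut : {set 'I_n}) (b : qmat n) : Prop :=
  forall i j, i != j -> (i \in mut) || (j \in mut) -> b i j != 0.

Definition has_cycle_in n (mut : {set 'I_n}) (b : qmat n) (S : {set 'I_n}) : Prop :=
  exists s : seq 'I_n, [/\ s != [::], all (fun x => x \in S) s & cycle (arr mut b) s].

Definition oriented_3cycle n (mut : {set 'I_n}) (b : qmat n) (S : {set 'I_n}) : Prop :=
  [/\ #|S| = 3%N, (#|S :\: mut| <= 1)%N & has_cycle_in mut b S].

Definition cycle_preserving_vertex n (mut : {set 'I_n}) (b : qmat n) (j : 'I_n) : Prop :=
  j \in mut /\
  forall i k : 'I_n, oriented_3cycle mut b [set i; j; k] ->
                     oriented_3cycle mut (mutate b j) [set i; j; k].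

Definition vortex_apex n (mut : {set 'I_n}) (b : qmat n) (a : 'I_n) : Prop :=
  exists S : {set 'I_n},
    [/\ #|S| = 4%N, a \in S, (3 <= #|S :&: mut|)%N,
        (forall x, x \in S -> ~~ arr mut b x a) \/ (forall x, x \in S -> ~~ arr mut b a x)
      & has_cycle_in mut b (S :\ a)].

Definition adj_frozen n (mut : {set 'I_n}) (b : qmat n) (i : 'I_n) : Prop :=
  exists f, f \notin mut /\ b i f != 0.

Definition red n (mut : {set 'I_n}) (b : qmat n) (i : 'I_n) : Prop :=
  [/\ i \in mut, adj_frozen mut b i & forall f, f \notin mut -> ~~ arr mut b i f].

Definition green n (mut : {set 'I_n}) (b : qmat n) (i : 'I_n) : Prop :=
  [/\ i \in mut, adj_frozen mut b i & forall f, f \notin mut -> ~~ arr mut b f i].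

Definition sign_coherent n (mut : {set 'I_n}) (b : qmat n) : Prop :=
  forall i, i \in mut -> adj_frozen mut b i -> red mut b i \/ green mut b i.

(* For a complete quiver and a cycle-preserving vertex j, mutation at j acts on
   the arrow between two other vertices i, k by a majority rule: a path
   i -> j -> k forces i -> k afterwards, a path k -> j -> i forces k -> i, and
   otherwise the arrow is unchanged.  Consequently, right after mutating at w
   and then at j, all arrows between w and the vertices not yet mutated point
   the same way as the arrow between w and j, and the majority rule preserves
   this alignment under all later mutations.  Frozen vertices are never
   mutated, and weak balance eventually mutates every mutable vertex, so from
   some step on every mutable vertex has all its frozen arrows pointing the
   same way, i.e. the quiver is sign-coherent. *)

From mathcomp Require Import all_boot all_order all_algebra.
From mathcomp Require Import zify.
Set Implicit Arguments. Unset Strict Implicit. Unset Printing Implicit Defensive.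
Import Order.TTheory GRing.Theory Num.Theory.
Local Open Scope ring_scope.

Section Mutation.
Variables (n : nat) (mut : {set 'I_n}).
Implicit Types (b : qmat n) (S : {set 'I_n}).

(* Unlike [arr], this ignores whether the endpoints are frozen. *)
Definition arrow b (x y : 'I_n) : bool := 0 < b x y.

Lemma quiver_diag0 b x : is_quiver b -> b x x = 0.
Proof. by move=> qb; have := qb x x; lia. Qed.

Lemma arrow_neq b x y : is_quiver b -> arrow b x y -> x != y.
Proof. by move=> qb; apply: contraTneq => ->; rewrite /arrow quiver_diag0. Qed.

Lemma arrow_asym b x y : is_quiver b -> arrow b x y -> ~~ arrow b y x.
Proof. by rewrite /arrow => qb; rewrite (qb y x); lia. Qed.

Lemma arrowN b x y : is_quiver b -> complete mut b -> x != y ->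
  (x \in mut) || (y \in mut) -> arrow b y x = ~~ arrow b x y.
Proof. by move=> qb cb xy m; have := cb x y xy m; rewrite /arrow (qb y x); lia. Qed.

Lemma quiver_neq0 b x y : is_quiver b -> (b x y != 0) = arrow b x y || arrow b y x.
Proof. by move=> qb; rewrite /arrow (qb y x); lia. Qed.

Lemma arr_le0 b x y : b x y <= 0 -> ~~ arr mut b x y.
Proof. by rewrite /arr ltNge => ->; rewrite andbF. Qed.

Lemma acyclic_of_rank b S (r : 'I_n -> nat) :
  (forall x y, x \in S -> y \in S -> arr mut b x y -> (r x < r y)%N) ->
  ~ has_cycle_in mut b S.
Proof.
move=> r_incr [[|x p] [//= _ /andP[xS pS] cyc]].
have r_path q y : y \in S -> all [in S] q -> path (arr mut b) y q -> q != [::] ->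
    (r y < r (last y q))%N.
  elim: q y => [//|z q IHq] y yS /= /andP[zS qS] /andP[yz zq] _.
  have ryz := r_incr _ _ yS zS yz.
  by case: q IHq qS zq => [//|w q] IHq qS zq; apply: ltn_trans ryz (IHq z zS qS zq isT).
have ne : rcons p x != [::] by case: (p).
have := r_path (rcons p x) x xS.
by rewrite all_rcons /= xS pS last_rcons ltnn => /(_ isT cyc ne).
Qed.

Lemma acyclic3 b S a c d : is_quiver b -> a != c -> c != d -> a != d ->
  S \subset [set a; c; d] ->
  ~~ arr mut b c a -> ~~ arr mut b d a -> ~~ arr mut b d c ->
  ~ has_cycle_in mut b S.
Proof.
move=> qb ac cd ad /subsetP sS nca nda ndc.
have [ca da dc] : [/\ c != a, d != a & d != c] by rewrite !(eq_sym d) eq_sym.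
pose r x := if x == a then 0%N else if x == c then 1%N else 2%N.
apply: (@acyclic_of_rank b S r) => x y /sS + /sS.
rewrite !inE -!orbA => /or3P[]/eqP-> /or3P[]/eqP->;
  rewrite /r ?eqxx ?(negbTE ca) ?(negbTE da) ?(negbTE dc) //;
  by [apply: contraTT; rewrite arr_le0 ?quiver_diag0 | move=> h; rewrite h in nca nda ndc].
Qed.

Lemma card_set3 (x y z : 'I_n) : x != y -> y != z -> x != z -> #|[set x; y; z]| = 3%N.
Proof.
move=> xy yz xz; rewrite setUC cardsU1 cards2 !inE xy.
by rewrite eq_sym (negbTE xz) eq_sym (negbTE yz).
Qed.

Lemma oriented_3cycleP b i j k : j \in mut -> i != j -> j != k -> i != k ->
  (i \in mut) || (k \in mut) ->
  has_cycle_in mut b [set i; j; k] -> oriented_3cycle mut b [set i; j; k].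
Proof.
move=> jm ij jk ik ikm cyc; split => //; first exact: card_set3.
suff [f sub] : exists f, [set i; j; k] :\: mut \subset [set f].
  by rewrite (leq_trans (subset_leq_card sub)) ?cards1.
case/orP: ikm => m; [exists k | exists i]; apply/subsetP => x;
  rewrite !inE -!orbA => /andP[xm /or3P[]/eqP ex]; rewrite ex ?eqxx //;
  by rewrite ex ?m ?jm in xm.
Qed.

Lemma mutate_is_quiver b j : is_quiver b -> is_quiver (mutate b j).
Proof.
move=> qb i k; rewrite /mutate orbC.
case: ((k == j) || (i == j)); first by rewrite (qb i k) opprK.
by rewrite (qb k i) (qb i j) (qb j k) (qb k j) (qb j i); lia.
Qed.

Lemma mutate_incident b j x y : (x == j) || (y == j) -> mutate b j x y = - b x y.
Proof. by rewrite /mutate => ->. Qed.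

Lemma arrow_mutate_in b j x : is_quiver b -> arrow (mutate b j) x j = arrow b j x.
Proof. by move=> qb; rewrite /arrow mutate_incident ?eqxx ?orbT // -qb. Qed.

Lemma arrow_mutate_out b j x : is_quiver b -> arrow (mutate b j) j x = arrow b x j.
Proof. by move=> qb; rewrite /arrow mutate_incident ?eqxx // -qb. Qed.

Lemma mutate_offpath b j i k : i != j -> k != j ->
  ~~ (arrow b i j && arrow b j k) -> ~~ (arrow b k j && arrow b j i) ->
  mutate b j i k = b i k.
Proof.
move=> ij kj; rewrite /mutate (negbTE ij) (negbTE kj) /arrow.
have max0 (x : int) : ~~ (0 < x) -> Num.max 0 x = 0 by rewrite -leNgt => /max_l.
by case/nandP=> /max0->; case/nandP=> /max0->; rewrite ?mul0r ?mulr0 subr0 addr0.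
Qed.

(* Cycle preservation enters only here: if k -> i, the oriented 3-cycle
   i -> j -> k -> i must survive mutation at j, which forces i -> k. *)
Lemma mutate_path_gt0 b j i k : is_quiver b -> complete mut b ->
  cycle_preserving_vertex mut b j -> i != k -> (i \in mut) || (k \in mut) ->
  arrow b i j -> arrow b j k -> 0 < mutate b j i k.
Proof.
move=> qb cb [jm cpj] ik ikm aij ajk.
have ij := arrow_neq qb aij; have jk := arrow_neq qb ajk.
have kj : k != j by rewrite eq_sym.
rewrite /arrow in aij ajk.
have mutate_ik : mutate b j i k = b i k + b i j * b j k.
  rewrite /mutate (negbTE ij) (negbTE kj) (qb k j) (max_r (ltW aij)) (max_r (ltW ajk)).
  by rewrite (max_l (_ : - b j k <= 0)) ?mul0r ?subr0 // oppr_le0 ltW.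
have [ik_ge0|ik_lt0] := lerP 0 (b i k); first by rewrite mutate_ik ltr_wpDl // mulr_gt0.
have cyc : has_cycle_in mut b [set i; j; k].
  exists [:: i; j; k]; split => //; first by rewrite /= !inE !eqxx ?orbT.
  by rewrite /= /arr jm orbT aij ajk /= (qb k i) oppr_gt0 ik_lt0 !andbT orbC.
have [_ _ cyc'] := cpj i k (oriented_3cycleP jm ij jk ik ikm cyc).
rewrite ltNge; apply/negP => le0.
apply: (acyclic3 (d := i) (mutate_is_quiver j qb) kj _ _ _ _ _ _ cyc').
- by rewrite eq_sym.
- by rewrite eq_sym.
- by apply/subsetP => x; rewrite !inE -!orbA => /or3P[]->; rewrite ?orbT.
- by rewrite arr_le0 // mutate_incident ?eqxx // oppr_le0 ltW.
- exact: arr_le0.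
- by rewrite arr_le0 // mutate_incident ?eqxx ?orbT // oppr_le0 ltW.
Qed.

Lemma arrow_mutate b j i k : is_quiver b -> complete mut b ->
  cycle_preserving_vertex mut b j -> i != j -> k != j -> i != k ->
  (i \in mut) || (k \in mut) ->
  arrow (mutate b j) i k = if arrow b i j == arrow b j k then arrow b i j else arrow b i k.
Proof.
move=> qb cb cpj ij kj ik ikm; have jm := cpj.1.
case aij: (arrow b i j); case ajk: (arrow b j k) => /=.
- exact: mutate_path_gt0.
- by rewrite /arrow mutate_offpath // ?ajk ?andbF // (negbTE (arrow_asym qb aij)) andbF.
- by rewrite /arrow mutate_offpath // ?aij // (negbTE (arrow_asym qb ajk)).
- apply/negbTE/(arrow_asym (mutate_is_quiver j qb))/mutate_path_gt0 => //.
  + by rewrite eq_sym.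
  + by rewrite orbC.
  + by rewrite (arrowN qb cb) ?ajk //; rewrite ?jm // eq_sym.
  + by rewrite (arrowN qb cb) ?aij //; rewrite ?jm ?orbT.
Qed.

Lemma complete_mutate b j : is_quiver b -> complete mut b ->
  cycle_preserving_vertex mut b j -> complete mut (mutate b j).
Proof.
move=> qb cb cpj i k ik ikm; have jm := cpj.1.
have [incident|] := boolP ((i == j) || (k == j)).
  by rewrite mutate_incident // oppr_eq0 cb.
rewrite negb_or => /andP[ij kj].
have [jk ki] : j != k /\ k != i by split; rewrite eq_sym.
rewrite quiver_neq0; last exact: mutate_is_quiver.
rewrite (arrow_mutate qb cb cpj ij kj ik ikm) (arrow_mutate qb cb cpj kj ij ki _);
  last by rewrite orbC.
rewrite (arrowN qb cb jk) ?jm // (arrowN qb cb ij) ?jm ?orbT // (arrowN qb cb ik) //.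
by do 3 case: arrow.
Qed.

Lemma mutate_closes_paths b w a e : is_quiver b -> complete mut b ->
  cycle_preserving_vertex mut b w -> a != e -> (a \in mut) || (e \in mut) ->
  arrow (mutate b w) e w -> arrow (mutate b w) w a -> arrow (mutate b w) a e.
Proof.
move=> qb cb cpw ae m; rewrite arrow_mutate_in // arrow_mutate_out // => awe aaw.
by rewrite arrow_mutate // ?aaw ?awe // ?(arrow_neq qb aaw) // eq_sym (arrow_neq qb awe).
Qed.

Lemma arrow_mutate2 b w j x : is_quiver b -> complete mut b ->
  cycle_preserving_vertex mut b w -> cycle_preserving_vertex mut (mutate b w) j ->
  j != w -> x != w -> x != j ->
  arrow (mutate (mutate b w) j) w x = arrow (mutate b w) w j.
Proof.
move=> qb cb cpw cpj jw xw xj; have wm := cpw.1; have jm := cpj.1.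
set s := mutate b w.
have qs : is_quiver s by apply: mutate_is_quiver.
have cs : complete mut s by apply: complete_mutate.
have jx : j != x by rewrite eq_sym.
rewrite arrow_mutate // 1?eq_sym ?wm //.
case: ifP => //; case awj: (arrow s w j); case ajx: (arrow s j x) => //= _.
- apply/idPn => naw.
  have axw : arrow s x w by rewrite (arrowN qs cs) ?wm 1?eq_sym.
  by rewrite (mutate_closes_paths qb cb cpw jx _ axw awj) ?jm in ajx.
- apply/negbTE/negP => awx.
  have ajw : arrow s j w by rewrite (arrowN qs cs) ?awj ?wm 1?eq_sym.
  have := mutate_closes_paths qb cb cpw xj _ ajw awx.
  by rewrite jm orbT => /(_ isT) /(arrow_asym qs); rewrite ajx.
Qed.

Lemma sign_coherent_aligned b : is_quiver b ->
  (forall v, v \in mut -> exists d, forall f, f \notin mut -> arrow b v f = d) ->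
  sign_coherent mut b.
Proof.
move=> qb aligned v vm adj; have [[] af] := aligned v vm.
- by right; split=> // f fm; apply/nandP; right; apply: arrow_asym qb (af f fm).
- by left; split=> // f fm; apply/nandP; right; exact/negbT/af.
Qed.
End Mutation.

Section MutatedPrefix.
Variables (n : nat) (M : nat -> 'I_n).

Definition mutated l : seq 'I_n := [seq M i | i <- iota 0 l].

Lemma mutatedP l v : reflect (exists2 i, (i < l)%N & M i = v) (v \in mutated l).
Proof.
apply: (iffP mapP) => -[i].
  by rewrite mem_iota => /andP[_ il] ->; exists i.
by move=> il <-; exists i; rewrite ?mem_iota.
Qed.

Lemma mem_mutatedS l v : (v \in mutated l.+1) = (v == M l) || (v \in mutated l).
Proof. by rewrite /mutated -addn1 iotaD map_cat cats1 mem_rcons inE. Qed.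

Lemma mutated_mono l1 l2 : (l1 <= l2)%N -> {subset mutated l1 <= mutated l2}.
Proof.
by move=> l12 v /mutatedP[i il Mi]; apply/mutatedP; exists i => //; apply: leq_trans l12.
Qed.

Lemma mutated_exhaust (s : seq 'I_n) : (forall v, v \in s -> exists k, M k = v) ->
  exists T, {subset s <= mutated T}.
Proof.
elim: s => [|v s IHs] hit; first by exists 0%N.
have [T sT] : exists T, {subset s <= mutated T}.
  by apply: IHs => u us; apply: hit; rewrite inE us orbT.
have [k Mk] := hit v (mem_head v s).
exists (maxn T k.+1) => u /predU1P[->|/sT uT].
  by apply/mutatedP; exists k; rewrite ?leq_maxr.
exact: mutated_mono (leq_maxl T k.+1) u uT.
Qed.
End MutatedPrefix.

Section MutationSequence.
Variables (n : nat) (mut : {set 'I_n}) (b : qmat n) (M : nat -> 'I_n).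
Hypotheses (qb : is_quiver b) (cb : complete mut b).
Hypothesis M_mut : forall l, M l \in mut.
Hypothesis M_reduced : forall l, M l != M l.+1.
Hypothesis M_cycle_preserving : forall l, cycle_preserving_vertex mut (qseq b M l) (M l).

Local Notation Q := (qseq b M).

Lemma qseqS l : Q l.+1 = mutate (Q l) (M l).
Proof. by []. Qed.

Lemma qseq_quiver l : is_quiver (Q l).
Proof. by elim: l => //= l ql; apply: mutate_is_quiver. Qed.

Lemma qseq_complete l : complete mut (Q l).
Proof. by elim: l => //= l cl; apply: complete_mutate (qseq_quiver l) cl _. Qed.

Lemma mutated_mut l v : v \in mutated M l -> v \in mut.
Proof. by case/mutatedP=> i _ <-. Qed.

(* [mutated M l] lists m_1, ..., m_l, so [Q l.+1] comes at least one mutation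
   after the one at [v]. *)
Lemma arrows_aligned l v : v \in mutated M l ->
  exists d, forall y, y \notin mutated M l.+1 -> arrow (Q l.+1) v y = d.
Proof.
elim: l v => [//|l IHl] v; rewrite mem_mutatedS => /predU1P[->|vl].
  exists (arrow (Q l.+1) (M l) (M l.+1)) => y.
  rewrite !mem_mutatedS !negb_or => /and3P[yl1 yl _].
  rewrite !qseqS; apply: arrow_mutate2 (M_cycle_preserving l) _ _ _ _ => //;
    [exact: qseq_quiver | exact: qseq_complete | exact: M_cycle_preserving l.+1
    | by rewrite eq_sym].
have [d v_aligned] := IHl v vl.
set s := Q l.+1; set j := M l.+1.
have qs : is_quiver s := qseq_quiver l.+1.
have cs : complete mut s := qseq_complete l.+1.
have jm : j \in mut := M_mut l.+1.
have unmutated y : y \notin mutated M l.+2 -> y != j /\ y \notin mutated M l.+1.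
  by rewrite mem_mutatedS negb_or => /andP[].
have [vj|vj] := eqVneq v j.
  exists (~~ d) => y /unmutated[yj yl]; rewrite qseqS -/s -/j vj arrow_mutate_out //.
  have jy : j != y by rewrite eq_sym.
  by rewrite (arrowN qs cs jy) ?jm // -vj v_aligned.
have vm : v \in mut := mutated_mut vl.
have next_arrow y : y \notin mutated M l.+2 ->
    arrow (Q l.+2) v y = if arrow s v j == arrow s j y then arrow s v j else d.
  move=> /unmutated[yj yl]; have vy : v != y.
    by apply: contraNneq yl => <-; rewrite mem_mutatedS vl orbT.
  rewrite qseqS (arrow_mutate qs cs (M_cycle_preserving l.+1) vj yj vy) ?vm //.
  by rewrite (v_aligned y yl).
have [jl|jl] := boolP (j \in mutated M l.+1).
  have jl' : j \in mutated M l.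
    by move: jl; rewrite mem_mutatedS eq_sym (negbTE (M_reduced l)).
  have [e j_aligned] := IHl j jl'.
  exists (if arrow s v j == e then e else d) => y y_unmutated.
  rewrite next_arrow // j_aligned; first by case: eqP.
  by case/unmutated: y_unmutated.
exists d => y y_unmutated; rewrite next_arrow // v_aligned //.
by case: ifP.
Qed.

Lemma eventually_sign_coherent : (forall v, v \in mut -> exists k, M k = v) ->
  exists T, forall l, (T < l)%N -> sign_coherent mut (Q l).
Proof.
move=> hit; have [T mutT] : exists T, {subset enum mut <= mutated M T}.
  by apply: mutated_exhaust => v; rewrite mem_enum; apply: hit.
exists T => -[//|l]; rewrite ltnS => Tl.
apply: sign_coherent_aligned => [|v vm]; first exact: qseq_quiver.
have vl : v \in mutated M l by apply: mutated_mono Tl _ (mutT v _); rewrite mem_enum.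
have [d v_aligned] := arrows_aligned vl.
exists d => f fm; apply: v_aligned; apply/mutatedP => -[i _ Mi].
by rewrite -Mi M_mut in fm.
Qed.
End MutationSequence.

Theorem mainTheorem14 (n : nat) (mut : {set 'I_n}) (b : qmat n)
  (M : nat -> 'I_n) :
  is_quiver b ->
  complete mut b ->
  (exists f : 'I_n, f \notin mut) ->
  (forall l, M l \in mut) ->
  (forall l, M l != M l.+1) ->
  (forall v, v \in mut -> forall N, exists k, (N <= k)%N /\ M k = v) ->
  (forall l, cycle_preserving_vertex mut (qseq b M l) (M l)) ->
  ~ vortex_apex mut b (M 0%N) ->
  exists T : nat, forall j : nat, (T < j)%N -> sign_coherent mut (qseq b M j).
Proof.
move=> qb cb _ M_mut M_reduced M_balanced M_cycle_preserving _.
apply: (eventually_sign_coherent qb cb M_mut M_reduced M_cycle_preserving) => v vm.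
by have [k [_ Mk]] := M_balanced v vm 0%N; exists k.
Qed.
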